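(* For the MDP $\Lambda$, there exists an optimal policy $\phi^*$ that is a threshold-type age-dependent policy. That is, there exist $K\in\mathbb{N}^+$, a finite action order $(b_1,\dots,b_K)$ with $b_k\in\mathcal{A}$ and $b_k\neq b_{k+1}$ for $1\le k<K$, and thresholds $\theta_{b_k\to b_{k+1}}\in\mathbb{N}^+$, $1\le k<K$, with $\theta_{b_1\to b_2}\le\theta_{b_2\to b_3}\le\dots$, such that $\phi^*(s)=b_1$ for $s<\theta_{b_1\to b_2}$, $\phi^*(s)=b_k$ for $\theta_{b_{k-1}\to b_k}\le s<\theta_{b_k\to b_{k+1}}$ ($1<k<K$), and $\phi^*(s)=b_K$ for $s\ge\theta_{b_{K-1}\to b_K}$.
   Context: Fix $N\in\mathbb{N}^+$ vehicle types $\mathcal{N}=\{1,\dots,N\}$. Type $n$ has arrival probability $p_n\in(0,1]$, mean operational cost $c_n\ge 0$ and mean sensing capability $r_n\in(0,1]$. Fix constants $\beta\in(0,1)$ and $\epsilon>0$. The action set is $\mathcal{A}=2^{\mathcal{N}}$ (all subsets of $\mathcal{N}$, including $\emptyset$). For $a\in\mathcal{A}$ define the success probability $Q_\emptyset=0$ and $Q_a=1-\prod_{n\in a}(1-r_np_n)$ for $a\neq\emptyset$, and the expected recruitment cost $E_a=\sum_{n\in a}p_nc_n$ ($E_\emptyset=0$). For a state (age) $\delta\in\mathbb{N}^+$ define $G_a(\delta)=Q_a(\delta^2+2\delta)\epsilon-(1+\delta)^2\epsilon$ and the immediate cost $u(\delta,a)=(1-\beta)E_a-\beta G_a(\delta)$.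 The MDP $\Lambda$ has state space $\mathbb{N}^+$, action space $\mathcal{A}$, and transitions: from state $s$ under action $a$, go to state $1$ with probability $Q_a$ and to state $s+1$ with probability $1-Q_a$. For a policy $\phi$ the average cost is $V(\phi)=\limsup_{T\to\infty}\frac1T\mathbb{E}^\phi[\sum_{t=1}^T u(S(t),A(t))]$ with $S(1)=1$; a policy is optimal if it minimizes $V$ over all policies. A deterministic stationary policy is a map $\phi:\mathbb{N}^+\to\mathcal{A}$. *)

From HB Require Import structures.
From mathcomp Require Import all_boot all_order all_algebra.
From mathcomp Require Import all_classical all_reals all_analysis.
Set Implicit Arguments. Unset Strict Implicit. Unset Printing Implicit Defensive.
Import Order.TTheory GRing.Theory Num.Theory.
Local Open Scope ring_scope.

Section MDP.
Variables (R : realType) (N : nat).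
Variables (p c r : 'I_N -> R) (beta eps : R).

(* Actions: subsets of the vehicle types. *)
Definition action := {set 'I_N}.

(* Q_a = 1 - prod_{n in a} (1 - r_n p_n); the empty product gives Q_emptyset = 0. *)
Definition Qa (a : action) : R := 1 - \prod_(n in a) (1 - r n * p n).
Definition Ea (a : action) : R := \sum_(n in a) p n * c n.
Definition Ga (a : action) (d : nat) : R :=
  Qa a * ((d%:R) ^+ 2 + 2 * d%:R) * eps - (1 + d%:R) ^+ 2 * eps.
Definition ucost (d : nat) (a : action) : R := (1 - beta) * Ea a - beta * Ga a d.

(* A general (history-dependent, randomized) policy: given the past history
   [(S(1),A(1)); ...; (S(t-1),A(t-1))] and the current state S(t), a probability
   weight for each action. *)
Definition policy := seq (nat * action) -> nat -> action -> R.

Definition valid_policy (pi : policy) : Prop :=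
  (forall h s a, 0 <= pi h s a) /\ (forall h s, \sum_(a : action) pi h s a = 1).

(* Jcost pi T h s = E^pi[ sum of the next T costs ] given history h and current
   state s; transitions: to 1 w.p. Q_a, to s+1 w.p. 1 - Q_a. *)
Fixpoint Jcost (pi : policy) (T : nat) (h : seq (nat * action)) (s : nat) : R :=
  match T with
  | 0 => 0
  | T'.+1 => \sum_(a : action) pi h s a *
       (ucost s a + Qa a * Jcost pi T' (rcons h (s, a)) 1
                  + (1 - Qa a) * Jcost pi T' (rcons h (s, a)) s.+1)
  end.

(* V(pi) = limsup_{T -> oo} (1/T) E^pi[ sum_{t=1}^T u(S(t),A(t)) ], S(1) = 1,
   in the extended reals (it may be +oo). *)
Definition avg_cost (pi : policy) : \bar R :=
  limn_esup (fun T : nat => ((Jcost pi T.+1 [::] 1) / T.+1%:R)%:E).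

Definition det_policy (phi : nat -> action) : policy :=
  fun _ s a => if a == phi s then 1 else 0.

End MDP.

(* Threshold-type age-dependent policy (0-indexed: b_1..b_K is nth b 0 .. nth b (K-1),
   threshold theta_{b_k -> b_{k+1}} is theta (k-1)). *)
Definition threshold_policy (A : eqType) (phi : nat -> A) : Prop :=
  exists (K : nat) (b : seq A) (theta : nat -> nat),
    [/\ (0 < K)%N, size b = K,
        (forall k, (k.+1 < K)%N -> (0 < theta k)%N /\ nth (nth (phi 1%N) b 0) b k != nth (nth (phi 1%N) b 0) b k.+1),
        (forall k, (k.+2 < K)%N -> (theta k <= theta k.+1)%N) &
        (forall s k, (0 < s)%N -> (k < K)%N ->
           (k = 0%N \/ (theta k.-1 <= s)%N) ->
           (k = K.-1 \/ (s < theta k)%N) ->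
           phi s = nth (phi 1%N) b k)].

From HB Require Import structures.
From mathcomp Require Import all_boot all_order all_algebra.
From mathcomp Require Import all_classical all_reals all_analysis.
From mathcomp Require Import ring lra zify.
Import Order.TTheory GRing.Theory Num.Theory.
Import numFieldNormedType.Exports.
Set Implicit Arguments.
Unset Strict Implicit.
Unset Printing Implicit Defensive.
Local Open Scope ring_scope.

(* With [Q_a = 1 - miss a], the immediate cost splits as
   [u s a = acost a + bcost * miss a * w s] with [w s = s^2 + 2 s]. A verification
   argument shows that a gain [g] and relative values [h] satisfying the average-cost
   optimality inequalities, with [h] bounded below and growing at most like the cost,
   make the greedy deterministic policy optimal with average cost [g]. Such a pair is
   built explicitly: for large ages the quadratic penalty forces the action [astar] of
   least miss probability, and [h] is the quadratic solving the resulting linear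
   recursion; below a state [Sbar], [h] is computed by backward induction, and [g] is
   chosen by the intermediate value theorem so that [h 1 = 0]. The greedy policy is
   then constant from [Sbar] on, hence of threshold type. *)

Lemma sum_weights_affine (R : comRingType) (I : finType) (w F : I -> R) (k K : R) :
  \sum_a w a = 1 -> \sum_a w a * (k * F a + K) = k * (\sum_a w a * F a) + K.
Proof.
move=> w1; rewrite mulr_sumr -[in RHS](mulr1 K) -w1 mulr_sumr -big_split /=.
by apply: eq_bigr => a _; ring.
Qed.

Lemma arg_min_dist (R : realDomainType) (I : finType) (i0 : I) (F G : I -> R) e :
  (forall i, `|F i - G i| <= e) ->
  `|F [arg min_(i < i0) F i]%O - G [arg min_(i < i0) G i]%O| <= e.
Proof.
move=> FG; case: arg_minP => // i _ Fi; case: arg_minP => // j _ Gj.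
have := Fi j isT; have := Gj i isT.
have := FG i; have := FG j; rewrite !ler_norml => /andP[? ?] /andP[? ?] ? ?.
by apply/andP; split; lra.
Qed.

Lemma lipschitz_continuous (R : realType) (f : R -> R) (L : R) : 0 < L ->
  (forall x y, `|f x - f y| <= L * `|x - y|) -> continuous f.
Proof.
move=> L_gt0 f_lip x; apply/cvgrPdist_lt => e e_gt0; near=> y.
rewrite (le_lt_trans (f_lip x y)) // -ltr_pdivlMl //; near: y.
apply/nbhs_ballP; exists (e / L) => /=; first by rewrite divr_gt0.
by move=> y; rewrite /ball /= mulrC.
Unshelve. all: by end_near.
Qed.

Section EventuallyConstant.
Variable A : eqType.

Definition threshold_blocks (phi : nat -> A) (b : seq A) (theta : nat -> nat) :=
  [/\ (0 < size b)%N,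
   forall k, (k.+1 < size b)%N ->
     (1 < theta k)%N /\ nth (phi 1%N) b k != nth (phi 1%N) b k.+1,
   forall k, (k.+2 < size b)%N -> (theta k <= theta k.+1)%N &
   forall s k, (0 < s)%N -> (k < size b)%N ->
     (k = 0%N \/ (theta k.-1 <= s)%N) -> (k = (size b).-1 \/ (s < theta k)%N) ->
     phi s = nth (phi 1%N) b k].

(* The blocks of [phi] are obtained from those of its shift [s |-> phi s.+1]
   by shifting every threshold up by one and, unless [phi 1 = phi 2], adding
   a first block [phi 1] with threshold 2. *)
Lemma eventually_constant_blocks n (phi : nat -> A) :
  (forall s, (n <= s)%N -> phi s = phi n) ->
  exists b theta, threshold_blocks phi b theta.
Proof.
elim: n phi => [|n IH] phi phi_n.
  exists [:: phi 1%N], (fun _ => 2%N); split => // s k _ k1 _ _.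
  have -> : k = 0%N by rewrite /= in k1; lia.
  by rewrite /= phi_n // (phi_n 1%N).
have [b [theta [b0 hb_dist hb_mono hb_val]]] :=
  IH (fun s => phi s.+1) (fun s hs => phi_n s.+1 hs).
have phi2 : phi 2%N = nth (phi 2%N) b 0.
  apply: (hb_val 1%N 0%N) => //; first by left.
  case: (ltnP 1 (size b)) => hs; [right; have := hb_dist 0%N hs | left]; lia.
have def1 k : (k < size b)%N -> nth (phi 1%N) b k = nth (phi 2%N) b k.
  exact: set_nth_default.
have [e12|n12] := eqVneq (phi 1%N) (phi 2%N).
  exists b, (fun k => (theta k).+1); split => //.
  - by move=> k hk; have [t2 nb] := hb_dist k hk; rewrite e12; split; first lia.
  move=> [//|[|s]] k _ kb hl hr /=; rewrite e12.
    case: k kb hl {hr} => // k kb [//|/= H].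
    by have := (hb_dist k kb).1; lia.
  exact: (hb_val s.+1 k).
exists (phi 1%N :: b), (fun k => if k is k'.+1 then (theta k').+1 else 2%N).
split => //.
- move=> [|k] hk /=; first by rewrite def1 // -phi2.
  have [t2 nb] := hb_dist k hk; split; first lia.
  by rewrite !def1 // ltnW.
- move=> [|k] hk /=; first by have := hb_dist 0%N; rewrite /= in hk; lia.
  by have := hb_mono k; rewrite /= in hk; lia.
move=> [//|[|s]] [|k] _ kb hl hr //=.
- case: k kb {hr} hl => [|k] kb [] // /= H.
  by have := (hb_dist k kb).1; lia.
- by case: hr => /= ?; lia.
rewrite def1 //; apply: (hb_val s.+1 k) => //.
- by case: k {kb hr} hl => [|k] [] // ?; [left | right].
- by case: hr => /= ?; [left; lia | right].
Qed.

Lemma eventually_constant_threshold_policy n (phi : nat -> A) :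
  (forall s, (n <= s)%N -> phi s = phi n) -> threshold_policy phi.
Proof.
move=> /eventually_constant_blocks [b [theta [b0 hb_dist hb_mono hb_val]]].
exists (size b), b, theta; split => // k hk.
have [t2 nb] := hb_dist k hk; split; first lia.
by rewrite !(set_nth_default (phi 1%N) (nth _ b 0)) //; lia.
Qed.

End EventuallyConstant.

Section LimsupBounds.
Variable R : realType.
Local Open Scope classical_set_scope.
Local Open Scope ereal_scope.

Lemma le_limn_esup (u v : (\bar R)^nat) :
  (forall n, u n <= v n) -> limn_esup u <= limn_esup v.
Proof.
move=> uv; rewrite !limn_esup_lim.
apply: lee_lim; [exact: is_cvg_esups | exact: is_cvg_esups |].
apply: nearW => n; apply: ge_ereal_sup => _ [k /= nk <-].
by apply: le_trans (uv k) _; apply: ereal_sup_ubound; exists k.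
Qed.

Lemma limn_esup_add_harmonic (g C : R) :
  limn_esup (fun T => (g + C * T.+1%:R^-1)%:E) = g%:E.
Proof.
have cvg_g : (fun T => (g + C * T.+1%:R^-1)%:E) @ \oo --> g%:E.
  apply: cvg_EFin; first exact: nearW.
  rewrite -[X in _ --> X]addr0 -(mulr0 C).
  by apply: cvgD; [exact: cvg_cst | exact: cvgM (cvg_cst C) (@cvg_harmonic R)].
by rewrite (cvg_limn_einf_sup cvg_g).2.
Qed.

End LimsupBounds.

Section Verification.
Variables (R : realType) (N : nat) (p c r : 'I_N -> R) (beta eps : R).
Local Notation J := (Jcost p c r beta eps).
Local Notation u := (ucost p c r beta eps).
Local Notation Q := (Qa p r).
Hypothesis Q_ge0 : forall a, 0 <= Q a.
Hypothesis Q_le1 : forall a, Q a <= 1.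

Fixpoint Efinal (pi : policy R N) (T : nat) (hs : seq (nat * action N)) (s : nat)
    (f : nat -> R) : R :=
  match T with
  | 0 => f s
  | T'.+1 => \sum_(a : action N) pi hs s a *
      (Q a * Efinal pi T' (rcons hs (s, a)) 1 f
       + (1 - Q a) * Efinal pi T' (rcons hs (s, a)) s.+1 f)
  end.

Lemma Jcost_ge_gain (pi : policy R N) (g : R) (h : nat -> R) :
  valid_policy pi ->
  (forall s a, (0 < s)%N -> g + h s <= u s a + Q a * h 1%N + (1 - Q a) * h s.+1) ->
  forall T hs s, (0 < s)%N -> T%:R * g + h s - Efinal pi T hs s h <= J pi T hs s.
Proof.
move=> [pi_ge0 pi_sum1] acoe; elim=> [|T IH] hs s s_gt0 /=.
  by rewrite mul0r add0r subrr.
rewrite [X in X <= _]addrC -(mulN1r (\sum_(a : action N) _)).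
rewrite -sum_weights_affine //.
apply: ler_sum => a _; apply: ler_wpM2l => //.
have Q1 : 0 <= 1 - Q a by rewrite subr_ge0.
have J1 := ler_wpM2l (Q_ge0 a) (IH (rcons hs (s, a)) 1%N isT).
have J2 := ler_wpM2l Q1 (IH (rcons hs (s, a)) s.+1 isT).
have := acoe s a s_gt0; rewrite -natr1; nra.
Qed.

Lemma Efinal_le_cost_increment (pi : policy R N) (f : nat -> R) (k K : R) :
  valid_policy pi ->
  (forall s a, (0 < s)%N -> Q a * f 1%N + (1 - Q a) * f s.+1 <= k * u s a + K) ->
  forall T hs s, (0 < s)%N ->
  Efinal pi T.+1 hs s f <= k * (J pi T.+1 hs s - J pi T hs s) + K.
Proof.
move=> [pi_ge0 pi_sum1] growth; elim=> [|T IH] hs s s_gt0.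
  rewrite /= subr0 -sum_weights_affine //; apply: ler_sum => a _.
  by rewrite !mulr0 !addr0 ler_wpM2l ?growth.
rewrite [Efinal _ _.+2 _ _ _]/= [J _ T.+2 _ _]/= [J _ T.+1 _ _]/= -sumrB.
set J1 := J pi T.+1; set J0 := J pi T.
have -> : k * (\sum_a (pi hs s a * (u s a + Q a * J1 (rcons hs (s, a)) 1
      + (1 - Q a) * J1 (rcons hs (s, a)) s.+1)
    - pi hs s a * (u s a + Q a * J0 (rcons hs (s, a)) 1
      + (1 - Q a) * J0 (rcons hs (s, a)) s.+1))) + K =
  \sum_a pi hs s a * (k * (Q a * (J1 (rcons hs (s, a)) 1 - J0 (rcons hs (s, a)) 1)
    + (1 - Q a) * (J1 (rcons hs (s, a)) s.+1 - J0 (rcons hs (s, a)) s.+1)) + K).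
  rewrite sum_weights_affine //; congr (k * _ + _).
  by apply: eq_bigr => a _; ring.
apply: ler_sum => a _; apply: ler_wpM2l => //.
have Q1 : 0 <= 1 - Q a by rewrite subr_ge0.
have E1 := ler_wpM2l (Q_ge0 a) (IH (rcons hs (s, a)) 1%N isT).
have E2 := ler_wpM2l Q1 (IH (rcons hs (s, a)) s.+1 isT).
rewrite -/J1 -/J0 in E1 E2.
by apply: le_trans (lerD E1 E2) _; lra.
Qed.

Lemma Jcost_det_policyS (phi : nat -> action N) T hs s :
  J (det_policy R phi) T.+1 hs s =
  u s (phi s) + Q (phi s) * J (det_policy R phi) T (rcons hs (s, phi s)) 1
    + (1 - Q (phi s)) * J (det_policy R phi) T (rcons hs (s, phi s)) s.+1.
Proof.
rewrite /= (bigD1 (phi s)) //= /det_policy eqxx mul1r big1 ?addr0 //.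
by move=> a /negbTE ->; rewrite mul0r.
Qed.

Lemma Jcost_det_le_gain (phi : nat -> action N) (g m : R) (h : nat -> R) :
  (forall s, (0 < s)%N ->
    u s (phi s) + Q (phi s) * h 1%N + (1 - Q (phi s)) * h s.+1 <= g + h s) ->
  (forall s, (0 < s)%N -> m <= h s) ->
  forall T hs s, (0 < s)%N -> J (det_policy R phi) T hs s <= T%:R * g + h s - m.
Proof.
move=> acoe h_ge; elim=> [|T IH] hs s s_gt0.
  by rewrite /= mul0r add0r subr_ge0 h_ge.
rewrite Jcost_det_policyS.
have Q1 : 0 <= 1 - Q (phi s) by rewrite subr_ge0.
have J1 := ler_wpM2l (Q_ge0 (phi s)) (IH (rcons hs (s, phi s)) 1%N isT).
have J2 := ler_wpM2l Q1 (IH (rcons hs (s, phi s)) s.+1 isT).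
have := acoe s s_gt0; rewrite -natr1; nra.
Qed.

(* The growth condition bounds the expected terminal value [h] by the cost
   increment, which turns the finite-horizon bound of [Jcost_ge_gain] into
   [J_T >= T g - M] by induction. *)
Lemma avg_cost_ge_gain (pi : policy R N) (g k K : R) (h : nat -> R) :
  valid_policy pi -> 0 <= k ->
  (forall s a, (0 < s)%N -> g + h s <= u s a + Q a * h 1%N + (1 - Q a) * h s.+1) ->
  (forall s a, (0 < s)%N -> Q a * h 1%N + (1 - Q a) * h s.+1 <= k * u s a + K) ->
  (g%:E <= avg_cost p c r beta eps pi)%E.
Proof.
move=> pi_valid k_ge0 acoe growth.
set M := Num.max 0 (k * g + K - h 1%N).
have M_ge0 : 0 <= M by rewrite le_max lexx.
have M_ge : k * g + K - h 1%N <= M by rewrite le_max lexx orbT.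
have J_ge T : T%:R * g - M <= J pi T [::] 1%N.
  elim: T => [|T IH]; first by rewrite /= mul0r sub0r oppr_le0.
  have L := Jcost_ge_gain pi_valid acoe T.+1 [::] (s := 1%N) isT.
  have B := Efinal_le_cost_increment pi_valid growth T [::] (s := 1%N) isT.
  have kIH := ler_wpM2l k_ge0 IH.
  have k1_gt0 : 0 < 1 + k by lra.
  rewrite -(ler_pM2l k1_gt0); rewrite -natr1 in L *; nra.
rewrite /avg_cost -(limn_esup_add_harmonic g (- M)).
apply: le_limn_esup => T; rewrite lee_fin.
have -> : g + - M * T.+1%:R^-1 = (T.+1%:R * g - M) / T.+1%:R.
  by field; rewrite addrC natr1 pnatr_eq0.
by apply: ler_wpM2r; rewrite ?invr_ge0 ?J_ge.
Qed.

Lemma avg_cost_det_le_gain (phi : nat -> action N) (g m : R) (h : nat -> R) :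
  (forall s, (0 < s)%N ->
    u s (phi s) + Q (phi s) * h 1%N + (1 - Q (phi s)) * h s.+1 <= g + h s) ->
  (forall s, (0 < s)%N -> m <= h s) ->
  (avg_cost p c r beta eps (det_policy R phi) <= g%:E)%E.
Proof.
move=> acoe h_ge; rewrite /avg_cost -(limn_esup_add_harmonic g (h 1%N - m)).
apply: le_limn_esup => T; rewrite lee_fin.
have -> : g + (h 1%N - m) * T.+1%:R^-1 = (T.+1%:R * g + h 1%N - m) / T.+1%:R.
  by field; rewrite addrC natr1 pnatr_eq0.
apply: ler_wpM2r; first by rewrite invr_ge0.
exact: (Jcost_det_le_gain acoe h_ge T.+1 [::] (s := 1%N) isT).
Qed.

End Verification.

Section OptimalThresholdPolicy.
Variables (R : realType) (N : nat) (p c r : 'I_N -> R) (beta eps : R).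
Hypothesis N_gt0 : (0 < N)%N.
Hypothesis p01 : forall n, 0 < p n <= 1.
Hypothesis c_ge0 : forall n, 0 <= c n.
Hypothesis r01 : forall n, 0 < r n <= 1.
Hypothesis beta01 : 0 < beta < 1.
Hypothesis eps_gt0 : 0 < eps.
Local Notation u := (ucost p c r beta eps).
Local Notation Q := (Qa p r).

Definition miss (a : action N) : R := \prod_(n in a) (1 - r n * p n).
Definition acost (a : action N) : R := (1 - beta) * Ea p c a + beta * eps.
Definition bcost : R := beta * eps.
Definition w (s : nat) : R := s%:R ^+ 2 + 2 * s%:R.

Lemma Qa_miss a : Q a = 1 - miss a. Proof. by []. Qed.

Lemma ucost_split s a : u s a = acost a + bcost * miss a * w s.
Proof. by rewrite /ucost /Ga Qa_miss /acost /bcost /w; ring. Qed.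

Lemma miss_factor01 n : 0 <= 1 - r n * p n <= 1.
Proof.
have /andP[r_gt0 r_le1] := r01 n; have /andP[p_gt0 p_le1] := p01 n.
apply/andP; split; last by rewrite lerBlDr lerDl mulr_ge0 // ltW.
by rewrite subr_ge0 mulr_ile1 // ltW.
Qed.

Lemma miss_ge0 a : 0 <= miss a.
Proof. by apply: prodr_ge0 => n _; have /andP[] := miss_factor01 n. Qed.

Lemma miss_le1 a : miss a <= 1.
Proof. by apply: prodr_ile1 => n _; exact: miss_factor01. Qed.

Lemma bcost_gt0 : 0 < bcost.
Proof. by have /andP[beta_gt0 _] := beta01; rewrite mulr_gt0. Qed.

Lemma acost_ge0 a : 0 <= acost a.
Proof.
have /andP[beta_gt0 beta_lt1] := beta01.
have Ea_ge0 : 0 <= Ea p c a.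
  by apply: sumr_ge0 => n _; rewrite mulr_ge0 ?c_ge0 //; have /andP[/ltW] := p01 n.
by rewrite addr_ge0 ?mulr_ge0 ?subr_ge0 // ltW.
Qed.

Lemma w_ge0 s : 0 <= w s.
Proof. by rewrite addr_ge0 ?sqr_ge0 ?mulr_ge0. Qed.

Lemma nat_le_w s : s%:R <= w s.
Proof. by rewrite /w; have : 0 <= s%:R :> R by []; nra. Qed.

Lemma miss_setT_le a : miss [set: 'I_N] <= miss a.
Proof.
rewrite {1}/miss (bigID (mem a)) /=.
have -> : \prod_(n in [set: 'I_N] | n \in a) (1 - r n * p n) = miss a.
  by apply: eq_bigl => n; rewrite inE.
rewrite mulrC ler_piMl ?miss_ge0 //.
by apply: prodr_ile1 => n _; exact: miss_factor01.
Qed.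

Lemma miss_setT_lt1 : miss [set: 'I_N] < 1.
Proof.
have n0 : 'I_N := Ordinal N_gt0.
apply: le_lt_trans (miss_setT_le [set n0]) _.
rewrite /miss big_set1 ltrBlDr ltrDl mulr_gt0 //.
- by have /andP[] := r01 n0.
- by have /andP[] := p01 n0.
Qed.

Definition astar : action N :=
  [arg min_(a < [set: 'I_N] | miss a == miss [set: 'I_N]) acost a]%O.
Definition qstar : R := miss astar.

Lemma astar_spec :
  qstar = miss [set: 'I_N] /\ forall a, miss a = qstar -> acost astar <= acost a.
Proof.
rewrite /qstar /astar; case: arg_minP => //= a /eqP a_min a_best.
by split=> // b b_min; apply: a_best; rewrite b_min a_min.
Qed.

Lemma qstar_ge0 : 0 <= qstar. Proof. exact: miss_ge0. Qed.
Lemma qstar_lt1 : qstar < 1. Proof. by rewrite astar_spec.1 miss_setT_lt1. Qed.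
Lemma qstar_le a : qstar <= miss a. Proof. by rewrite astar_spec.1 miss_setT_le. Qed.
Lemma onemqstar_gt0 : 0 < 1 - qstar. Proof. by rewrite subr_gt0 qstar_lt1. Qed.
Lemma onemqstar_neq0 : 1 - qstar != 0. Proof. exact: lt0r_neq0 onemqstar_gt0. Qed.

Definition Xswitch : R :=
  \sum_(a | miss a != qstar) `|acost astar - acost a| / (miss a - qstar).

Lemma astar_best_beyond_Xswitch X a :
  Xswitch <= X -> acost astar + qstar * X <= acost a + miss a * X.
Proof.
move=> X_ge; have [a_min|a_nmin] := eqVneq (miss a) qstar.
  by rewrite a_min lerD2r astar_spec.2.
have gap_gt0 : 0 < miss a - qstar.
  by rewrite subr_gt0 lt_neqAle eq_sym a_nmin qstar_le.
have : `|acost astar - acost a| / (miss a - qstar) <= X.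
  apply: le_trans X_ge; rewrite /Xswitch (bigD1 a) //= lerDl.
  by apply: sumr_ge0 => b /andP[b_nmin _]; rewrite divr_ge0 // subr_ge0 qstar_le.
rewrite ler_pdivrMr // => H; have := ler_norm (acost astar - acost a); nra.
Qed.

(* The quadratic [tail g] solves [h s = acost astar - g + qstar (bcost w s + h s.+1)];
   its coefficients come from matching powers of [s]. *)
Definition tail2 : R := qstar * bcost / (1 - qstar).
Definition tail1 : R := 2 * qstar * (bcost + tail2) / (1 - qstar).
Definition tail0 (g : R) : R := (acost astar - g + qstar * (tail2 + tail1)) / (1 - qstar).
Definition tail (g : R) (s : nat) : R := tail2 * s%:R ^+ 2 + tail1 * s%:R + tail0 g.

Lemma tail2_ge0 : 0 <= tail2.
Proof.
apply: divr_ge0; last exact: ltW onemqstar_gt0.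
exact: mulr_ge0 qstar_ge0 (ltW bcost_gt0).
Qed.

Lemma tail1_ge0 : 0 <= tail1.
Proof.
apply: divr_ge0; last exact: ltW onemqstar_gt0.
apply: mulr_ge0; first by rewrite mulr_ge0 ?qstar_ge0.
exact: addr_ge0 (ltW bcost_gt0) tail2_ge0.
Qed.

Lemma tail_rec g s : tail g s = acost astar - g + qstar * (bcost * w s + tail g s.+1).
Proof.
by rewrite /tail /w /tail0 /tail1 /tail2 -natr1; field; exact: onemqstar_neq0.
Qed.

Lemma tail0_le g g' : g <= g' -> tail0 g' <= tail0 g.
Proof.
move=> gg'; rewrite /tail0 ler_pM2r ?invr_gt0 ?onemqstar_gt0 //.
by rewrite lerD2r lerD2l lerN2.
Qed.

Definition gmax : R := acost astar + tail2 + tail1.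

Lemma gmax_ge0 : 0 <= gmax.
Proof. exact: addr_ge0 (addr_ge0 (acost_ge0 _) tail2_ge0) tail1_ge0. Qed.

Lemma tail0_gmax : tail0 gmax = - (tail2 + tail1).
Proof. by rewrite /tail0 /gmax; field; exact: onemqstar_neq0. Qed.

(* Locked so that [/=] does not unfold [Sbar] into a successor, which [lia]
   would treat as an atom distinct from [Sbar]. *)
Definition Sbar : nat := locked (Num.Def.archi_bound (Xswitch / bcost)).+1.

Lemma Xswitch_le_tail g s :
  g <= gmax -> (Sbar <= s)%N -> Xswitch <= bcost * w s + tail g s.+1.
Proof.
move=> g_le; rewrite /Sbar -lock => s_ge; have B_gt0 := bcost_gt0.
have X_lt : Xswitch / bcost < s%:R.
  by apply: lt_le_trans (unstable.ltr_bound _) _; rewrite ler_nat ltnW.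
have X_le : Xswitch <= bcost * w s.
  apply: le_trans (ler_wpM2l (ltW B_gt0) (nat_le_w s)).
  by rewrite -ler_pdivrMl // mulrC ltW.
have : 0 <= tail g s.+1.
  have := tail0_le g_le; rewrite tail0_gmax /tail => t0.
  have := tail2_ge0; have := tail1_ge0; have : 1 <= s.+1%:R :> R by rewrite ler1n.
  nra.
lra.
Qed.

Definition lookahead (g : R) (s : nat) (Y : R) (a : action N) : R :=
  acost a - g + miss a * (bcost * w s + Y).

Definition greedy (g : R) (s : nat) (Y : R) : action N :=
  [arg min_(a < astar) lookahead g s Y a]%O.

Lemma greedy_min g s Y a : lookahead g s Y (greedy g s Y) <= lookahead g s Y a.
Proof. by rewrite /greedy; case: arg_minP => // b _; apply. Qed.

Fixpoint backward (g : R) (d : nat) : R :=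
  if d is d'.+1 then
    lookahead g (Sbar - d) (backward g d') (greedy g (Sbar - d) (backward g d'))
  else tail g Sbar.

Definition hrel (g : R) (s : nat) : R :=
  if (Sbar <= s)%N then tail g s else backward g (Sbar - s).

Definition greedy_policy (g : R) (s : nat) : action N :=
  if (Sbar <= s)%N then astar else greedy g s (hrel g s.+1).

Lemma hrel_tail g s : (Sbar <= s)%N -> hrel g s = tail g s.
Proof. by rewrite /hrel => ->. Qed.

Lemma hrel_below g s : (s < Sbar)%N ->
  hrel g s = lookahead g s (hrel g s.+1) (greedy g s (hrel g s.+1)).
Proof.
move=> s_lt; have back_next : backward g (Sbar - s.+1) = hrel g s.+1.
  rewrite /hrel; case: leqP => // s_ge.
  have s1 : s.+1 = Sbar by lia.
  by rewrite s1 subnn.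
rewrite {1}/hrel leqNgt s_lt /=.
have -> : (Sbar - s = (Sbar - s.+1).+1)%N by lia.
rewrite [backward _ _.+1]/= back_next.
by have -> : (Sbar - (Sbar - s.+1).+1 = s)%N by lia.
Qed.

Lemma Sbar_down_ind (P : nat -> Prop) :
  (forall s, (Sbar <= s)%N -> P s) -> (forall s, (s < Sbar)%N -> P s.+1 -> P s) ->
  forall s, P s.
Proof.
move=> P_ge P_lt; suff P_sub k : P (Sbar - k)%N.
  move=> s; case: (leqP Sbar s) => s_lt; first exact: P_ge.
  by rewrite -(subKn (ltnW s_lt)).
elim: k => [|k IH]; first by apply: P_ge; rewrite subn0.
case: (ltnP k Sbar) => k_lt.
  have e : (Sbar - k = (Sbar - k.+1).+1)%N by lia.
  by apply: P_lt; [lia | rewrite -e].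
by have -> : (Sbar - k.+1 = Sbar - k)%N by lia.
Qed.

Lemma hrel_le_tail g s : hrel g s <= tail g s.
Proof.
elim/Sbar_down_ind: s => [s s_ge|s s_lt IH]; first by rewrite hrel_tail.
rewrite hrel_below // (le_trans (greedy_min _ _ _ astar)) // /lookahead tail_rec.
by rewrite lerD2l ler_wpM2l ?lerD2l // qstar_ge0.
Qed.

Lemma hrel_ge g s : 0 <= g -> - `|tail0 g| - (Sbar - s)%:R * g <= hrel g s.
Proof.
move=> g_ge0; elim/Sbar_down_ind: s => [s s_ge|s s_lt IH].
  have /eqP -> : (Sbar - s == 0)%N by rewrite subn_eq0.
  rewrite hrel_tail // /tail mul0r subr0.
  have : 0 <= tail2 * s%:R ^+ 2 by rewrite mulr_ge0 ?tail2_ge0 ?sqr_ge0.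
  have : 0 <= tail1 * s%:R by rewrite mulr_ge0 ?tail1_ge0.
  have := ler_norm (- tail0 g); rewrite normrN; lra.
rewrite hrel_below // /lookahead.
set Y := hrel g s.+1 in IH *; set b := greedy g s Y.
have -> : (Sbar - s = (Sbar - s.+1).+1)%N by lia.
set L := - `|tail0 g| - (Sbar - s.+1)%:R * g in IH *.
have -> : - `|tail0 g| - (Sbar - s.+1).+1%:R * g = L - g by rewrite /L -natr1; ring.
have L_le0 : L <= 0.
  have : 0 <= (Sbar - s.+1)%:R * g by rewrite mulr_ge0.
  by have := normr_ge0 (tail0 g); rewrite /L; lra.
have missBw_ge0 : 0 <= miss b * (bcost * w s).
  exact: mulr_ge0 (miss_ge0 b) (mulr_ge0 (ltW bcost_gt0) (w_ge0 s)).
have := miss_ge0 b; have := miss_le1 b; have := acost_ge0 b.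
rewrite mulrDr; nra.
Qed.

Lemma lookahead_dist g g' s Y Y' a :
  `|lookahead g s Y a - lookahead g' s Y' a| <= `|g - g'| + `|Y - Y'|.
Proof.
have -> : lookahead g s Y a - lookahead g' s Y' a = (g' - g) + miss a * (Y - Y').
  by rewrite /lookahead; ring.
rewrite (le_trans (ler_normD _ _)) // distrC lerD2l normrM ger0_norm ?miss_ge0 //.
by rewrite ler_piMl ?miss_le1.
Qed.

Lemma hrel_lipschitz g g' s :
  `|hrel g s - hrel g' s| <= ((Sbar - s)%:R + (1 - qstar)^-1) * `|g - g'|.
Proof.
elim/Sbar_down_ind: s => [s s_ge|s s_lt IH].
  have /eqP -> : (Sbar - s == 0)%N by rewrite subn_eq0.
  have -> : hrel g s - hrel g' s = (1 - qstar)^-1 * (g' - g).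
    by rewrite !hrel_tail // /tail /tail0; field; exact: onemqstar_neq0.
  by rewrite add0r normrM ger0_norm ?invr_ge0 ?(ltW onemqstar_gt0) // distrC.
rewrite (hrel_below g s_lt) (hrel_below g' s_lt).
set Y := hrel g s.+1 in IH *; set Y' := hrel g' s.+1 in IH *.
have := arg_min_dist astar (lookahead_dist g g' s Y Y').
rewrite -/(greedy g s Y) -/(greedy g' s Y') => /le_trans; apply.
have -> : (Sbar - s = (Sbar - s.+1).+1)%N by lia.
rewrite -natr1 !mulrDl mul1r; rewrite mulrDl in IH; lra.
Qed.

Lemma hrel0_ge0 s : 0 <= hrel 0 s.
Proof.
elim/Sbar_down_ind: s => [s s_ge|s s_lt IH].
  have tail00_ge0 : 0 <= tail0 0.
    rewrite /tail0 subr0 divr_ge0 //; last exact: ltW onemqstar_gt0.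
    exact: addr_ge0 (acost_ge0 _) (mulr_ge0 qstar_ge0 (addr_ge0 tail2_ge0 tail1_ge0)).
  rewrite hrel_tail //; apply: addr_ge0 tail00_ge0.
  exact: addr_ge0 (mulr_ge0 tail2_ge0 (sqr_ge0 _)) (mulr_ge0 tail1_ge0 (ler0n _ _)).
rewrite hrel_below // /lookahead subr0; apply: addr_ge0 (acost_ge0 _) _.
exact: mulr_ge0 (miss_ge0 _) (addr_ge0 (mulr_ge0 (ltW bcost_gt0) (w_ge0 s)) IH).
Qed.

Lemma hrel_gmax_le0 : hrel gmax 1 <= 0.
Proof.
by rewrite (le_trans (hrel_le_tail _ _)) // /tail tail0_gmax expr1n !mulr1 subrr.
Qed.

Lemma exists_gain : exists g, [/\ 0 <= g, g <= gmax & hrel g 1 = 0].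
Proof.
have hrel1_cont : continuous (hrel^~ 1%N).
  apply: (@lipschitz_continuous _ _ ((Sbar - 1)%:R + (1 - qstar)^-1)).
    by rewrite ltr_wpDl // invr_gt0 onemqstar_gt0.
  by move=> g g'; exact: hrel_lipschitz.
have [] := @IVT R (hrel^~ 1%N) 0 gmax 0 gmax_ge0.
- by apply: continuous_subspaceT => g; exact: hrel1_cont.
- by rewrite ge_min hrel_gmax_le0 orbT le_max hrel0_ge0.
by move=> g; rewrite in_itv /= => /andP[g_ge0 g_le] hg; exists g.
Qed.

Lemma hrel_optimality_ge g s a : g <= gmax -> hrel g 1 = 0 ->
  g + hrel g s <= u s a + Q a * hrel g 1 + (1 - Q a) * hrel g s.+1.
Proof.
move=> g_le h1; rewrite h1 mulr0 addr0 ucost_split Qa_miss subKr.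
case: (leqP Sbar s) => s_ge.
  rewrite (hrel_tail g s_ge) (hrel_tail g (leqW s_ge)) (tail_rec g s).
  have := astar_best_beyond_Xswitch a (Xswitch_le_tail g_le s_ge); nra.
have := greedy_min g s (hrel g s.+1) a; rewrite (hrel_below g s_ge) /lookahead; nra.
Qed.

Lemma hrel_optimality_greedy g s : hrel g 1 = 0 ->
  u s (greedy_policy g s) + Q (greedy_policy g s) * hrel g 1
    + (1 - Q (greedy_policy g s)) * hrel g s.+1 <= g + hrel g s.
Proof.
move=> h1; rewrite h1 mulr0 addr0 ucost_split Qa_miss subKr /greedy_policy.
case: (leqP Sbar s) => s_ge.
  by rewrite (hrel_tail g s_ge) (hrel_tail g (leqW s_ge)) (tail_rec g s) /qstar; lra.
by rewrite (hrel_below g s_ge) /lookahead; lra.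
Qed.

Lemma growth_rate_ge0 : 0 <= (tail2 + tail1) / bcost.
Proof. exact: divr_ge0 (addr_ge0 tail2_ge0 tail1_ge0) (ltW bcost_gt0). Qed.

Lemma hrel_growth g s a : hrel g 1 = 0 ->
  Q a * hrel g 1 + (1 - Q a) * hrel g s.+1 <=
  (tail2 + tail1) / bcost * u s a + `|tail2 + tail1 + tail0 g|.
Proof.
move=> h1; rewrite h1 mulr0 add0r ucost_split Qa_miss subKr.
set K := `|tail2 + tail1 + tail0 g|.
have tail_le : tail g s.+1 <= (tail2 + tail1) * w s + K.
  have -> : tail g s.+1 = tail2 * w s + tail1 * s%:R + (tail2 + tail1 + tail0 g).
    by rewrite /tail /w -natr1; ring.
  have := ler_wpM2l tail1_ge0 (nat_le_w s); have := ler_norm (tail2 + tail1 + tail0 g).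
  by rewrite /K; lra.
have B_gt0 := bcost_gt0; have := acost_ge0 a; have := miss_ge0 a; have := miss_le1 a.
have := ler_wpM2l (miss_ge0 a) (le_trans (hrel_le_tail g s.+1) tail_le).
have := growth_rate_ge0.
have -> : (tail2 + tail1) / bcost * (acost a + bcost * miss a * w s) =
    (tail2 + tail1) / bcost * acost a + miss a * ((tail2 + tail1) * w s).
  by field; rewrite gt_eqF.
have := normr_ge0 (tail2 + tail1 + tail0 g); rewrite -/K; nra.
Qed.

Lemma optimal_threshold_policy :
  exists phi : nat -> action N,
    (forall pi : policy R N, valid_policy pi ->
       (avg_cost p c r beta eps (det_policy R phi) <= avg_cost p c r beta eps pi)%E)
    /\ threshold_policy phi.
Proof.
have Q_ge0 a : 0 <= Q a by rewrite Qa_miss subr_ge0 miss_le1.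
have Q_le1 a : Q a <= 1 by rewrite Qa_miss gerBl miss_ge0.
have [g [g_ge0 g_le h1]] := exists_gain.
exists (greedy_policy g); split.
  move=> pi pi_valid; apply: (@le_trans _ _ g%:E).
    apply: (avg_cost_det_le_gain Q_ge0 Q_le1 (m := - `|tail0 g| - Sbar%:R * g)).
      by move=> s _; exact: hrel_optimality_greedy.
    move=> s _; apply: le_trans (hrel_ge s g_ge0).
    by rewrite lerD2l lerN2 ler_wpM2r // ler_nat leq_subr.
  apply: (avg_cost_ge_gain Q_ge0 Q_le1 pi_valid growth_rate_ge0).
  - by move=> s a _; exact: hrel_optimality_ge.
  - by move=> s a _; exact: hrel_growth.
apply: (@eventually_constant_threshold_policy _ Sbar) => s s_ge.
by rewrite /greedy_policy s_ge leqnn.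
Qed.

End OptimalThresholdPolicy.

Theorem theorem1 (R : realType) (N : nat) (p c r : 'I_N -> R) (beta eps : R)
  (hN : (0 < N)%N)
  (hp : forall n, 0 < p n <= 1) (hc : forall n, 0 <= c n)
  (hr : forall n, 0 < r n <= 1)
  (hbeta : 0 < beta < 1) (heps : 0 < eps) :
  exists phi : nat -> action N,
    (forall pi : policy R N, valid_policy pi ->
       (avg_cost p c r beta eps (det_policy R phi) <= avg_cost p c r beta eps pi)%E)
    /\ threshold_policy phi.
Proof. exact: optimal_threshold_policy hN hp hc hr hbeta heps. Qed.
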